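(* Consider a gossip network consisting of a source node $s$ and end-nodes $\mathcal{N}=\{1,\dots,n\}$, with the dynamics described in the context. For a nonempty subset $S\subseteq\mathcal{N}$, let $F_S(t)=\max_{j\in S}F_j(t)$ and $F_S=\lim_{t\to\infty}\mathbb{E}[F_S(t)]$. Then for every nonempty $S\subseteq \mathcal{N}$, $$F_S=\frac{\lambda_s(S)+\sum_{i\in N(S)}\lambda_i(S)\,F_{S\cup\{i\}}}{\lambda_e+\lambda_s(S)+\sum_{i\in N(S)}\lambda_i(S)}.$$
   Context: Model: The information at the source is updated (a new version is generated) according to a Poisson process of rate $\lambda_e>0$. The source sends its current version to end-node $j\in\mathcal{N}$ according to a Poisson process of rate $\lambda_{sj}\ge 0$, and end-node $i$ sends its currently stored version to end-node $j\neq i$ according to a Poisson process of rate $\lambda_{ij}\ge 0$; all these processes are independent. When a node receives a version, it keeps the fresher of its stored version and the received one. The binary freshness of end-node $k$ at time $t$ is $F_k(t)=1$ if node $k$ stores the current version of the source, and $F_k(t)=0$ otherwise. Thus: when the source generates a new version, all $F_k$ become $0$; when the source updates node $j$, $F_j$ becomes $1$; when node $i$ updates node $j$, $F_j$ becomes $\max(F_i,F_j)$. Notation: for $S\subseteq\mathcal{N}$, $\lambda_s(S)=\sum_{j\in S}\lambda_{sj}$ is the total update rate from the source into $S$; for $i\notin S$, $\lambda_i(S)=\sum_{j\in S}\lambda_{ij}$ is the total update rate from node $i$ into $S$; $N(S)=\{i\in\mathcal{N}\setminus S:\lambda_i(S)>0\}$ is the set of updating neighbors of $S$. *)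

From HB Require Import structures.
From mathcomp Require Import all_boot all_order all_algebra.
From mathcomp Require Import all_classical all_reals all_analysis.
Set Implicit Arguments. Unset Strict Implicit. Unset Printing Implicit Defensive.
Import Order.TTheory GRing.Theory Num.Theory.
Import numFieldNormedType.Exports.
Local Open Scope ring_scope.

(* Joint binary-freshness state of the end-nodes 'I_n : x k = true iff node k
   stores the current version of the source. *)
Definition fstate (n : nat) := {ffun 'I_n -> bool}.

Definition new_version {n} (x : fstate n) : fstate n := [ffun => false].
Definition src_update {n} (j : 'I_n) (x : fstate n) : fstate n :=
  [ffun k => if k == j then true else x k].
Definition node_update {n} (i j : 'I_n) (x : fstate n) : fstate n :=
  [ffun k => if k == j then x i || x j else x k].

(* Right-hand side of the Kolmogorov forward equation of the continuous-time
   Markov chain: each event e with rate r_e and effect f_e contributes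
   r_e * (P(f_e X = y) - P(X = y)). *)
Definition fwd_rhs {R : realType} {n} (le : R) (ls : 'I_n -> R)
  (lam : 'I_n -> 'I_n -> R) (q : fstate n -> R) (y : fstate n) : R :=
  le * (\sum_(x | new_version x == y) q x - q y)
  + \sum_(j : 'I_n) ls j * (\sum_(x | src_update j x == y) q x - q y)
  + \sum_(i : 'I_n) \sum_(j : 'I_n | i != j)
       lam i j * (\sum_(x | node_update i j x == y) q x - q y).

(* p x t = probability that the freshness state at time t is x. *)
Definition freshness_law {R : realType} {n} (le : R) (ls : 'I_n -> R)
  (lam : 'I_n -> 'I_n -> R) (p : fstate n -> R -> R) : Prop :=
  (forall x, 0 <= p x 0) /\ (\sum_x p x 0 = 1) /\
  (forall (y : fstate n) (t : R),
      is_derive t 1 (p y) (fwd_rhs le ls lam (fun x => p x t) y)).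

(* E[F_S(t)] with F_S(t) = max_{j in S} F_j(t). *)
Definition EF {R : realType} {n} (p : fstate n -> R -> R) (S : {set 'I_n})
  (t : R) : R :=
  \sum_(x : fstate n) p x t * (if [exists j in S, x j] then 1 else 0).

Definition lam_s {R : realType} {n} (ls : 'I_n -> R) (S : {set 'I_n}) : R :=
  \sum_(j in S) ls j.
Definition lam_i {R : realType} {n} (lam : 'I_n -> 'I_n -> R) (i : 'I_n)
  (S : {set 'I_n}) : R := \sum_(j in S) lam i j.
Definition nbrs {R : realType} {n} (lam : 'I_n -> 'I_n -> R) (S : {set 'I_n})
  : {set 'I_n} := [set i | (i \notin S) && (0 < lam_i lam i S)].

From HB Require Import structures.
From mathcomp Require Import all_boot all_order all_algebra.
From mathcomp Require Import all_classical all_reals all_analysis.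
From mathcomp Require Import ring lra.
Set Implicit Arguments. Unset Strict Implicit. Unset Printing Implicit Defensive.
Import Order.TTheory GRing.Theory Num.Theory.
Import numFieldNormedType.Exports.
Local Open Scope classical_set_scope.
Local Open Scope ring_scope.

(* Dualising the forward equation gives d/dt E[g(X_t)] = E[(L g)(X_t)] for the
   generator L of the chain.  For the indicator g = F_S, L F_S only involves
   F_S itself and the F_(S + i) with i in N(S), so E F_S(t) solves a linear
   equation f' = h - c f with c = λ_e + λ_s(S) + Σ_i λ_i(S) > 0 whose forcing
   h converges by induction on |N \ S|; such an f tends to lim h / c. *)

Section LinearRelaxation.
Variable R : realType.

Lemma is_derive_nonpos_le (v dv : R -> R) (a b : R) :
  (forall t : R, is_derive t 1 v (dv t)) -> (forall t, a <= t -> dv t <= 0) ->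
  a <= b -> v b <= v a.
Proof.
move=> dv_v dv_le0 ab.
have [|x xab E] := MVT_segment ab (fun x _ => dv_v x).
  apply/continuous_subspaceT => x.
  exact/differentiable_continuous/derivable1_diffP.
by rewrite -subr_le0 E mulr_le0_ge0 ?subr_ge0 ?dv_le0 ?(itvP xab).
Qed.

Variables (f h : R -> R) (c : R).
Hypotheses (c_gt0 : 0 < c) (df : forall t : R, is_derive t 1 f (h t - c * f t)).

(* [expR (c t) * (f t - M / c)] is nonincreasing once [h <= M]. *)
Lemma linear_relaxation_ub (M e : R) : 0 < e ->
  (\forall t \near +oo, h t <= M) -> \forall t \near +oo, f t <= M / c + e.
Proof.
move=> e_gt0 [a [_ hM]].
pose v (t : R) := expR (c * t) * (f t - M / c).
have dv (t : R) : is_derive t 1 v (expR (c * t) * (h t - M)).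
  have dexp : is_derive t 1 (fun s => expR (c * s)) (expR (c * t) * c).
    apply: is_derive1_comp.
    by rewrite -[c in is_derive _ _ _ c]mulr1; apply: is_deriveZ.
  apply: is_derive_eq (is_deriveM dexp (is_deriveB (df t) (is_derive_cst (M / c) t 1))) _.
  by rewrite /GRing.scale /= !fctE; field; rewrite gt_eqF.
have a1 : a < a + 1 by rewrite ltrDl.
have v_le t : a + 1 <= t -> v t <= v (a + 1).
  apply: is_derive_nonpos_le => // s a1s.
  by rewrite mulr_ge0_le0 ?expR_ge0 // subr_le0 hM // (lt_le_trans a1).
near=> t.
have ect_gt0 : 0 < expR (c * t) := expR_gt0 _.
rewrite -lerBlDl -[f t - _](mulKf (lt0r_neq0 ect_gt0)) -/(v t) mulrC ler_pdivrMr //.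
apply: le_trans (v_le t _) _; first by near: t; apply: nbhs_pinfty_ge; rewrite num_real.
apply: le_trans (ler_norm _) _.
have: `|v (a + 1)| / (e * c) <= t.
  by near: t; apply: nbhs_pinfty_ge; rewrite num_real.
rewrite ler_pdivrMr ?mulr_gt0 // => /le_trans; apply.
rewrite mulrCA ler_pM2l // mulrC.
by apply: le_trans (expR_ge1Dx _); rewrite lerDr.
Unshelve. all: end_near. Qed.

End LinearRelaxation.

Lemma linear_relaxation_cvg (R : realType) (f h : R -> R) (c L : R) :
  0 < c -> (forall t : R, is_derive t 1 f (h t - c * f t)) ->
  h t @[t --> +oo] --> L -> f t @[t --> +oo] --> L / c.
Proof.
move=> c_gt0 df hL; apply/cvgrPdist_le => e e_gt0.
have e2_gt0 : 0 < e / 2 by rewrite divr_gt0.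
have ce2_gt0 : 0 < c * (e / 2) by rewrite mulr_gt0.
have dNf (t : R) : is_derive t 1 (fun s => - f s) (- h t - c * - f t).
  by apply: is_derive_eq (is_deriveN (df t)) _; rewrite mulrN opprK opprB addrC.
have /cvgrPdist_le /(_ _ ce2_gt0) hLe := hL.
have shift (s : R) : (s + c * (e / 2)) / c = s / c + e / 2.
  by field; rewrite gt_eqF.
have ub := @linear_relaxation_ub _ _ _ _ c_gt0 df (L + c * (e / 2)) _ e2_gt0.
have lb := @linear_relaxation_ub _ _ (fun s => - h s) _ c_gt0 dNf
  (- L + c * (e / 2)) _ e2_gt0.
rewrite !shift mulNr in ub lb.
have {}ub : \forall t \near +oo, f t <= L / c + e / 2 + e / 2.
  by apply: ub; apply: filterS hLe => t; rewrite ler_distlC => /andP[].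
have {}lb : \forall t \near +oo, - f t <= - (L / c) + e / 2 + e / 2.
  by apply: lb; apply: filterS hLe => t; rewrite ler_distlC => /andP[]; lra.
near=> t.
have ubt : f t <= L / c + e / 2 + e / 2 by near: t.
have lbt : - f t <= - (L / c) + e / 2 + e / 2 by near: t.
rewrite ler_distlC; apply/andP; split; lra.
Unshelve. all: end_near. Qed.

Lemma is_derive_sum (R : realType) (I : Type) (r : seq I) (P : pred I)
    (h : I -> R -> R) (dh : I -> R) (t : R) :
  (forall i, P i -> is_derive t 1 (h i) (dh i)) ->
  is_derive t 1 (\sum_(i <- r | P i) h i) (\sum_(i <- r | P i) dh i).
Proof.
move=> dh_h; apply: (big_ind2 (fun F d => is_derive t 1 F d)) => //.
  exact: is_derive_cst.
by move=> F1 d1 F2 d2 dF1 dF2; apply: is_deriveD.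
Qed.

Lemma sum_jump_dual (R : comRingType) (T : finType) (f : T -> T) (q g : T -> R) :
  \sum_y g y * (\sum_(x | f x == y) q x - q y) = \sum_x q x * (g (f x) - g x).
Proof.
under eq_bigr do rewrite mulrBr mulr_sumr.
under [RHS]eq_bigr do rewrite mulrBr.
rewrite !sumrB [X in _ = X - _](partition_big f xpredT) //=.
congr (_ - _); apply: eq_bigr => y _; last by rewrite mulrC.
by apply: eq_bigr => x /eqP <-; rewrite mulrC.
Qed.

Lemma exists_in_setU1 (T : finType) (P : pred T) (i : T) (S : {set T}) :
  [exists k in i |: S, P k] = P i || [exists k in S, P k].
Proof.
apply/existsP/orP => [[k /andP[]] | [Pi | /existsP[k /andP[kS Pk]]]].
- rewrite in_setU1 => /orP[/eqP <- | kS Pk]; first by left.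
  by right; apply/existsP; exists k; rewrite kS.
- by exists i; rewrite setU11.
- by exists k; rewrite setU1r.
Qed.

Definition fresh {R : realType} {n} (S : {set 'I_n}) (x : fstate n) : R :=
  if [exists j in S, x j] then 1 else 0.

Section Generator.
Variables (R : realType) (n : nat) (le : R) (ls : 'I_n -> R).
Variable lam : 'I_n -> 'I_n -> R.

Definition generator (g : fstate n -> R) (x : fstate n) : R :=
  le * (g (new_version x) - g x)
  + \sum_j ls j * (g (src_update j x) - g x)
  + \sum_i \sum_(j | i != j) lam i j * (g (node_update i j x) - g x).

Lemma sum_fwd_rhs (q g : fstate n -> R) :
  \sum_y g y * fwd_rhs le ls lam q y = \sum_x q x * generator g x.
Proof.
have jump a f : \sum_y g y * (a * (\sum_(x | f x == y) q x - q y)) =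
                \sum_x q x * (a * (g (f x) - g x)).
  under eq_bigr do rewrite mulrCA.
  by rewrite -mulr_sumr sum_jump_dual mulr_sumr; under eq_bigr do rewrite mulrCA.
rewrite /fwd_rhs /generator.
under eq_bigr => y _ do rewrite [g y * _]mulrDr [g y * (_ + _)]mulrDr !mulr_sumr.
under [RHS]eq_bigr => x _ do
  rewrite [q x * _]mulrDr [q x * (_ + _)]mulrDr !mulr_sumr.
rewrite !big_split /= jump; congr (_ + _ + _).
  by rewrite exchange_big [RHS]exchange_big; apply: eq_bigr => j _; apply: jump.
under eq_bigr do under eq_bigr do rewrite mulr_sumr.
under [RHS]eq_bigr do under eq_bigr do rewrite mulr_sumr.
rewrite exchange_big [RHS]exchange_big; apply: eq_bigr => i _.
by rewrite exchange_big [RHS]exchange_big; apply: eq_bigr => j _; apply: jump.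
Qed.

Lemma generator_cst (a : R) (x : fstate n) : generator (fun=> a) x = 0.
Proof.
rewrite /generator subrr mulr0 add0r big1 => [|j _]; last exact: mulr0.
by rewrite add0r big1 // => i _; rewrite big1 // => j _; rewrite mulr0.
Qed.

Lemma fresh_new_version (S : {set 'I_n}) (x : fstate n) :
  fresh S (new_version x) = 0 :> R.
Proof. by rewrite /fresh; case: existsP => // -[j]; rewrite ffunE andbF. Qed.

Lemma fresh_src_update (S : {set 'I_n}) (j : 'I_n) (x : fstate n) :
  fresh S (src_update j x) - fresh S x = (j \in S)%:R * (1 - fresh S x) :> R.
Proof.
rewrite /fresh; have [jS | jNS] := boolP (j \in S).
  by case: existsP => [_|[]]; [rewrite mul1r | exists j; rewrite jS ffunE eqxx].
rewrite mul0r (@eq_existsb _ _ (fun k => (k \in S) && x k)) ?subrr // => k.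
by rewrite ffunE; case: eqP => // ->; rewrite (negbTE jNS).
Qed.

Lemma node_update_exists_in (S : {set 'I_n}) (i j : 'I_n) (x : fstate n) :
  [exists k in S, node_update i j x k] = [exists k in S, x k] || (j \in S) && x i.
Proof.
apply/existsP/orP => [[k /andP[kS]] | [/existsP[k /andP[kS xk]] | /andP[jS xi]]].
- rewrite ffunE; case: eqP => [<- | _ xk].
    case/orP=> [xi | xk]; first by right; rewrite kS.
    by left; apply/existsP; exists k; rewrite kS.
  by left; apply/existsP; exists k; rewrite kS.
- by exists k; rewrite kS ffunE; case: eqP => // Ekj; rewrite -Ekj xk orbT.
- by exists j; rewrite jS ffunE eqxx xi.
Qed.

Lemma fresh_node_update (S : {set 'I_n}) (i j : 'I_n) (x : fstate n) :
  fresh S (node_update i j x) - fresh S x =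
  ((j \in S) && (i \notin S))%:R * (fresh (i |: S) x - fresh S x) :> R.
Proof.
rewrite /fresh node_update_exists_in exists_in_setU1.
case: (boolP [exists k in S, x k]) => [_ | xNS]; first by rewrite orbT !subrr mulr0.
have [iS | iNS] := boolP (i \in S).
  have -> : x i = false by apply: contraNF xNS => xi; apply/existsP; exists i; rewrite iS.
  by rewrite /= !andbF subrr mul0r.
rewrite /= andbT orbF.
by case: (j \in S); case: (x i); rewrite /= ?mul1r ?mul0r ?subr0.
Qed.

Hypothesis lam_ge0 : forall i j, i != j -> 0 <= lam i j.

Lemma sum_node_update_fresh (S : {set 'I_n}) (x : fstate n) :
  \sum_i \sum_(j | i != j) lam i j * (fresh S (node_update i j x) - fresh S x) =
  \sum_(i in nbrs lam S) lam_i lam i S * (fresh (i |: S) x - fresh S x).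
Proof.
under eq_bigr do under eq_bigr do rewrite fresh_node_update mulrA.
rewrite [RHS]big_mkcond; apply: eq_bigr => i _; rewrite -mulr_suml inE.
have [iS | iNS] /= := boolP (i \in S).
  by rewrite big1 ?mul0r // => j _; rewrite andbF mulr0.
have -> : \sum_(j | i != j) lam i j * ((j \in S) && true)%:R = lam_i lam i S.
  rewrite /lam_i big_mkcond [RHS]big_mkcond; apply: eq_bigr => j _.
  have [<- | _] := eqVneq i j; first by rewrite (negbTE iNS).
  by case: (j \in S); rewrite /= ?mulr1 ?mulr0.
case: ifP => // /negbT; rewrite -leNgt => lamS_le0.
suff -> : lam_i lam i S = 0 by rewrite mul0r.
apply/eqP; rewrite eq_le lamS_le0 sumr_ge0 // => j jS; apply: lam_ge0.
by apply: contraNneq iNS => ->.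
Qed.

Lemma generator_fresh (S : {set 'I_n}) (x : fstate n) :
  generator (fresh S) x =
  lam_s ls S * (1 - fresh S x) - le * fresh S x
  + \sum_(i in nbrs lam S) lam_i lam i S * (fresh (i |: S) x - fresh S x).
Proof.
rewrite /generator fresh_new_version sub0r mulrN sum_node_update_fresh.
congr (_ + _); rewrite addrC; congr (_ + _).
under eq_bigr do rewrite fresh_src_update mulrA.
rewrite -mulr_suml /lam_s [in RHS]big_mkcond; congr (_ * _); apply: eq_bigr => j _.
by case: (j \in S); rewrite /= ?mulr1 ?mulr0.
Qed.

End Generator.

Section FreshnessDynamics.
Variables (R : realType) (n : nat) (le : R) (ls : 'I_n -> R).
Variables (lam : 'I_n -> 'I_n -> R) (p : fstate n -> R -> R).
Hypothesis forward : forall (y : fstate n) (t : R),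
  is_derive t 1 (p y) (fwd_rhs le ls lam (fun x => p x t) y).
Hypothesis p0_sum1 : \sum_x p x 0 = 1.

Lemma is_derive_expectation (g : fstate n -> R) (t : R) :
  is_derive t 1 (fun s => \sum_x p x s * g x)
    (\sum_x p x t * generator le ls lam g x).
Proof.
have dterm x :
    is_derive t 1 (fun s => p x s * g x) (fwd_rhs le ls lam (p^~ t) x * g x).
  apply: is_derive_eq (is_deriveM (forward x t) (is_derive_cst (g x) t 1)) _.
  by rewrite scaler0 add0r /GRing.scale /= mulrC.
rewrite -sum_fwd_rhs -fct_sumE.
apply: is_derive_eq (is_derive_sum _ (fun x _ => dterm x)) _.
by under eq_bigr do rewrite mulrC.
Qed.

Lemma sum_law_eq1 (t : R) : \sum_x p x t = 1.
Proof.
have E s : \sum_x p x s = \sum_x p x s * (fun=> 1) x.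
  by apply: eq_bigr => x _; rewrite mulr1.
rewrite -p0_sum1 !E.
apply: (@is_derive_0_is_cst _ (fun s => \sum_x p x s * (fun=> 1) x)) => s.
apply: is_derive_eq (is_derive_expectation _ s) _.
by rewrite big1 // => x _; rewrite generator_cst mulr0.
Qed.

Hypothesis lam_ge0 : forall i j, i != j -> 0 <= lam i j.

Lemma is_derive_EF (S : {set 'I_n}) (t : R) :
  is_derive t 1 (EF p S)
    (lam_s ls S + \sum_(i in nbrs lam S) lam_i lam i S * EF p (i |: S) t
     - (le + lam_s ls S + \sum_(i in nbrs lam S) lam_i lam i S) * EF p S t).
Proof.
apply: is_derive_eq (is_derive_expectation _ t) _.
under eq_bigr do rewrite generator_fresh // mulrDr mulrBr mulr_sumr.
rewrite big_split sumrB /=.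
have scale a (f : fstate n -> R) :
    \sum_x p x t * (a * f x) = a * \sum_x p x t * f x.
  by rewrite mulr_sumr; apply: eq_bigr => x _; rewrite mulrCA.
have diff (S1 S2 : {set 'I_n}) :
  \sum_x p x t * (fresh S1 x - fresh S2 x) = EF p S1 t - EF p S2 t.
  by rewrite -sumrB; apply: eq_bigr => x _; rewrite mulrBr.
rewrite (scale _ (fun x => 1 - fresh S x)) (scale _ (fresh S)) exchange_big /=.
under [X in _ + X = _]eq_bigr do rewrite (scale _ (fun x => fresh _ x - fresh S x)) diff.
have -> : \sum_x p x t * (1 - fresh S x) = 1 - EF p S t.
  rewrite -[in RHS](sum_law_eq1 t) /EF -sumrB.
  by apply: eq_bigr => x _; rewrite mulrBr mulr1.
have -> : \sum_(i in nbrs lam S) lam_i lam i S * (EF p (i |: S) t - EF p S t) =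
          \sum_(i in nbrs lam S) lam_i lam i S * EF p (i |: S) t
          - (\sum_(i in nbrs lam S) lam_i lam i S) * EF p S t.
  by rewrite mulr_suml -sumrB; apply: eq_bigr => i _; rewrite mulrBr.
by rewrite -/(EF p S t); ring.
Qed.

Hypotheses (le_gt0 : 0 < le) (ls_ge0 : forall j, 0 <= ls j).

Lemma EF_cvg_nbrs (S : {set 'I_n}) :
  (forall i, i \in nbrs lam S -> cvg (EF p (i |: S) t @[t --> +oo])) ->
  EF p S t @[t --> +oo] -->
    (lam_s ls S + \sum_(i in nbrs lam S)
                    lam_i lam i S * lim (EF p (i |: S) t @[t --> +oo]))
    / (le + lam_s ls S + \sum_(i in nbrs lam S) lam_i lam i S).
Proof.
move=> cvg_nbrs; apply: linear_relaxation_cvg (is_derive_EF S) _.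
  have lam_sS_ge0 : 0 <= lam_s ls S by apply: sumr_ge0.
  have lam_nS_ge0 : 0 <= \sum_(i in nbrs lam S) lam_i lam i S.
    by apply: sumr_ge0 => i; rewrite inE => /andP[_ /ltW].
  by rewrite ltr_wpDr // ltr_wpDr.
apply: cvgD (cvg_cst _) _.
apply: cvg_big => [|i /cvg_nbrs]; [exact: add_continuous | exact: cvgMr].
Qed.

Lemma EF_cvg (S : {set 'I_n}) : cvg (EF p S t @[t --> +oo]).
Proof.
have [k] := ubnP #|~: S|; elim: k S => // k IHk S ltSk.
apply/cvg_ex; eexists; apply: EF_cvg_nbrs => i; rewrite inE => /andP[iNS _].
rewrite ltnS in ltSk; apply/IHk/(leq_trans _ ltSk)/proper_card.
by rewrite finset.setCU finset.setIC -finset.setDE properD1 // inE.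
Qed.

End FreshnessDynamics.

Theorem theorem1 (R : realType) (n : nat) (le : R) (ls : 'I_n -> R)
  (lam : 'I_n -> 'I_n -> R) (p : fstate n -> R -> R) :
  0 < le ->
  (forall j, 0 <= ls j) ->
  (forall i j, i != j -> 0 <= lam i j) ->
  freshness_law le ls lam p ->
  forall S : {set 'I_n}, S != finset.set0 ->
    cvg (EF p S t @[t --> +oo]) /\
    lim (EF p S t @[t --> +oo]) =
      (lam_s ls S + \sum_(i in nbrs lam S)
                       lam_i lam i S * lim (EF p (i |: S) t @[t --> +oo]))
      / (le + lam_s ls S + \sum_(i in nbrs lam S) lam_i lam i S).
Proof.
move=> le_gt0 ls_ge0 lam_ge0 [_ [p0_sum1 forward]] S _.
have cvgEF := EF_cvg forward p0_sum1 lam_ge0 le_gt0 ls_ge0.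
split; first exact: cvgEF.
apply/cvg_lim; first exact: Rhausdorff.
by apply: EF_cvg_nbrs => // i _; apply: cvgEF.
Qed.
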